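(* Let $G=(V,E)$ be a finite undirected graph with $V=\{1,\dots,n\}$ and let $H=(V,E')$ be a subgraph of $G$ with the same vertex set, i.e. $E'\subseteq E$. Then $A_H$ is positive definite for every $A\in\mathbb{P}_G$ if and only if $H=G_1\cup\dots\cup G_k$, where $G_1,\dots,G_k$ are induced subgraphs of $G$ that are pairwise disconnected in $H$ (i.e. the vertex sets of the $G_i$ partition $V$, each $G_i$ is the subgraph of $G$ induced by its vertex set, and $H$ has no edge between distinct $G_i$).
   Context: For a symmetric $n\times n$ real matrix $A=(a_{ij})$ and an undirected graph $K=(V,F)$ on $V=\{1,\dots,n\}$, the thresholded matrix $A_K$ is defined by $(A_K)_{ij}=a_{ij}$ if $i=j$ or $(i,j)\in F$, and $(A_K)_{ij}=0$ otherwise. $\mathbb{P}_G$ denotes the set of symmetric positive definite $n\times n$ real matrices $A$ with $a_{ij}=0$ whenever $i\neq j$ and $(i,j)\notin E$. *)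

From HB Require Import structures.
From mathcomp Require Import all_boot all_order all_algebra.
From mathcomp Require Import reals.
Set Implicit Arguments. Unset Strict Implicit. Unset Printing Implicit Defensive.
Import Order.TTheory GRing.Theory Num.Theory.
Local Open Scope ring_scope.

Definition simple_graph (n : nat) (E : rel 'I_n) : Prop :=
  symmetric E /\ irreflexive E.

Definition posdef (R : realType) (n : nat) (A : 'M[R]_n) : Prop :=
  A^T = A /\ forall x : 'cV[R]_n, x != 0 -> 0 < (x^T *m A *m x) ord0 ord0.

Definition thresh (R : realType) (n : nat) (K : rel 'I_n) (A : 'M[R]_n) : 'M[R]_n :=
  \matrix_(i, j) (if (i == j) || K i j then A i j else 0).

Definition in_PG (R : realType) (n : nat) (G : rel 'I_n) (A : 'M[R]_n) : Prop :=
  posdef A /\ forall i j : 'I_n, i != j -> ~~ G i j -> A i j = 0.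

From HB Require Import structures.
From mathcomp Require Import all_boot all_order all_algebra.
From mathcomp Require Import reals.
From mathcomp Require Import ring lra.
Set Implicit Arguments. Unset Strict Implicit. Unset Printing Implicit Defensive.
Import Order.TTheory GRing.Theory Num.Theory.
Local Open Scope ring_scope.

(* If H is G cut to the blocks of a partition, then A_H is A with all entries
   outside the diagonal blocks erased, and its quadratic form is the sum of the
   quadratic forms of A on the restrictions of x to the blocks; one of them is
   positive, so A_H is positive definite.
   Conversely, take for the partition the connected components of H.  If an
   edge ij of G lies inside a component but is missing from H, let
   A = 2 L_H + D + c (E_ij + E_ji), with L_H the Laplacian of H and D the
   diagonal indicator of the complement of the component of i.  Along a path
   from i to j the Laplacian energy bounds (x_i - x_j)^2, so for small c > 0
   the form of A is positive; but A_H = 2 L_H + D vanishes on the indicator of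
   the component of i. *)

Section QuadraticForms.
Context {R : realType} {n : nat}.
Implicit Types (a b : 'I_n -> 'I_n -> R) (d f g x : 'I_n -> R).

Definition qform a x := \sum_u \sum_v x u * a u v * x v.

Lemma mx_qformE (A : 'M[R]_n) (x : 'cV[R]_n) :
  (x^T *m A *m x) ord0 ord0 = qform (fun u v => A u v) (fun u => x u ord0).
Proof.
rewrite /qform mxE.
under eq_bigr => v _ do rewrite mxE big_distrl /=.
rewrite exchange_big /=; apply: eq_bigr => u _; apply: eq_bigr => v _.
by rewrite !mxE.
Qed.

Lemma eq_qform a b x : (forall u v, a u v = b u v) -> qform a x = qform b x.
Proof. by move=> eq_ab; apply: eq_bigr => u _; apply: eq_bigr => v _; rewrite eq_ab. Qed.

Lemma qformD a b x : qform (fun u v => a u v + b u v) x = qform a x + qform b x.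
Proof.
rewrite /qform -big_split; apply: eq_bigr => u _.
rewrite -big_split; apply: eq_bigr => v _ /=; ring.
Qed.

Lemma qformB a b x : qform (fun u v => a u v - b u v) x = qform a x - qform b x.
Proof.
rewrite /qform -sumrB; apply: eq_bigr => u _.
rewrite -sumrB; apply: eq_bigr => v _ /=; ring.
Qed.

Lemma qformZ (c : R) a x : qform (fun u v => c * a u v) x = c * qform a x.
Proof.
rewrite /qform mulr_sumr; apply: eq_bigr => u _.
rewrite mulr_sumr; apply: eq_bigr => v _; ring.
Qed.

Lemma qform_rank1 f g x :
  qform (fun u v => f u * g v) x = (\sum_u f u * x u) * (\sum_v g v * x v).
Proof.
rewrite /qform mulr_suml; apply: eq_bigr => u _.
rewrite mulr_sumr; apply: eq_bigr => v _; ring.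
Qed.

Lemma sqr_le0_eq0 (a : R) : a ^+ 2 <= 0 -> a = 0.
Proof. by move=> a_le0; apply/eqP; rewrite -sqrf_eq0 eq_le a_le0 sqr_ge0. Qed.

Lemma sumr_delta (i : 'I_n) f : \sum_u (u == i)%:R * f u = f i.
Proof.
under eq_bigr => u _ do rewrite mulr_natl mulrb.
by rewrite -big_mkcond big_pred1_eq.
Qed.

Lemma qform_diag d x :
  qform (fun u v => (u == v)%:R * d u) x = \sum_u d u * x u ^+ 2.
Proof.
apply: eq_bigr => u _.
have termE v : x u * ((u == v)%:R * d u) * x v = (v == u)%:R * (d u * x u * x v).
  by rewrite eq_sym; ring.
by under eq_bigr => v _ do rewrite termE; rewrite sumr_delta expr2 mulrA.
Qed.

End QuadraticForms.

Section LaplacianEnergy.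
Context {R : realType} {n : nat} (H : rel 'I_n).
Implicit Types (x : 'I_n -> R) (a b : 'I_n).

Definition lap_energy x := \sum_a \sum_b (H a b)%:R * (x a - x b) ^+ 2.

Definition deg a : R := \sum_b (H a b)%:R.

Definition laplacian a b : R := (a == b)%:R * deg a - (H a b)%:R.

Lemma lap_energy_ge0 x : 0 <= lap_energy x.
Proof.
by apply: sumr_ge0 => a _; apply: sumr_ge0 => b _; rewrite mulr_ge0 ?sqr_ge0.
Qed.

Lemma lap_energy_edge x a b : H a b -> (x a - x b) ^+ 2 <= lap_energy x.
Proof.
move=> Hab; rewrite /lap_energy (bigD1 a) //= (bigD1 b) //= Hab mul1r -addrA lerDl.
apply: addr_ge0; first by apply: sumr_ge0 => c _; rewrite mulr_ge0 ?sqr_ge0.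
by apply: sumr_ge0 => c _; apply: sumr_ge0 => e _; rewrite mulr_ge0 ?sqr_ge0.
Qed.

Lemma connect_lap_energy_bound a b : connect H a b ->
  exists2 K : R, 0 <= K & forall x, (x a - x b) ^+ 2 <= K * lap_energy x.
Proof.
move/connectP => [p pth ->] {b}.
elim: p a pth => [|w p IH] a /=.
  by move=> _; exists 0 => // x; rewrite subrr expr0n mul0r.
move=> /andP[Haw pw]; have [K K0 HK] := IH w pw.
exists (2 + 2 * K) => [|x]; first lra.
have := lap_energy_edge x Haw; have := HK x; have := lap_energy_ge0 x.
have := sqr_ge0 ((x a - x w) - (x w - x (last w p))).
set L := lap_energy x; nra.
Qed.

Lemma lap_energy_eq0 x : (forall a b, H a b -> x a = x b) -> lap_energy x = 0.
Proof.
move=> xH; apply: big1 => a _; apply: big1 => b _.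
by case: (boolP (H a b)) => [/xH->|_]; rewrite ?subrr ?expr0n ?mulr0 ?mul0r.
Qed.

Lemma lap_energy_eq0_connect x a b :
  lap_energy x = 0 -> connect H a b -> x a = x b.
Proof.
move=> L0 /connectP[p pth ->] {b}.
elim: p a pth => [|w p IH] a //= /andP[Haw pw]; rewrite -(IH w pw).
apply/eqP; rewrite -subr_eq0 -sqrf_eq0 eq_le sqr_ge0 andbT -L0.
exact: lap_energy_edge.
Qed.

Lemma qform_laplacian x : symmetric H -> 2 * qform laplacian x = lap_energy x.
Proof.
move=> Hsym.
have Lsplit : lap_energy x = \sum_a \sum_b (H a b)%:R * x a ^+ 2
    + \sum_a \sum_b (H a b)%:R * x b ^+ 2 - 2 * qform (fun a b => (H a b)%:R) x.
  rewrite /lap_energy /qform mulr_sumr -big_split -sumrB; apply: eq_bigr => a _ /=.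
  rewrite mulr_sumr -big_split -sumrB; apply: eq_bigr => b _ /=; ring.
have degE : \sum_a \sum_b (H a b)%:R * x a ^+ 2 = \sum_a deg a * x a ^+ 2.
  by apply: eq_bigr => a _; rewrite mulr_suml.
have symE : \sum_a \sum_b (H a b)%:R * x b ^+ 2 = \sum_a \sum_b (H a b)%:R * x a ^+ 2.
  by rewrite exchange_big; apply: eq_bigr => a _; apply: eq_bigr => b _; rewrite Hsym.
rewrite Lsplit symE degE -qform_diag /laplacian qformB; ring.
Qed.

End LaplacianEnergy.

Section Counterexample.
Context {R : realType} {n : nat} (H : rel 'I_n) (i j : 'I_n).
Hypotheses (Hsym : symmetric H) (neq_ij : i != j).
Implicit Types (x : 'I_n -> R) (u v : 'I_n).

Definition off_component u : R := (~~ connect H i u)%:R.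

Definition edge_pair u v : R := (u == i)%:R * (v == j)%:R + (u == j)%:R * (v == i)%:R.

Definition witness (c : R) : 'M[R]_n :=
  \matrix_(u, v) (2 * laplacian H u v + (u == v)%:R * off_component u + c * edge_pair u v).

Lemma edge_pair_diag u : edge_pair u u = 0.
Proof.
have uij : (u == i) && (u == j) = false.
  by apply: contraNF neq_ij => /andP[/eqP<- /eqP<-]; rewrite eqxx.
by rewrite /edge_pair -!natrM !mulnb uij andbC uij addr0.
Qed.

Lemma edge_pair_eq0 (P : rel 'I_n) u v :
  symmetric P -> P u v != P i j -> edge_pair u v = 0.
Proof.
move=> Psym Puv; rewrite /edge_pair -!natrM !mulnb.
have -> : (u == i) && (v == j) = false.
  by apply: contraNF Puv => /andP[/eqP-> /eqP->]; rewrite eqxx.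
have -> : (u == j) && (v == i) = false.
  by apply: contraNF Puv => /andP[/eqP-> /eqP->]; rewrite Psym eqxx.
by rewrite addr0.
Qed.

Lemma qform_edge_pair x : qform edge_pair x = 2 * x i * x j.
Proof.
by rewrite qformD !qform_rank1 !sumr_delta; ring.
Qed.

Lemma qform_witness c x :
  qform (fun u v => witness c u v) x
  = lap_energy H x + \sum_u off_component u * x u ^+ 2 + c * (2 * x i * x j).
Proof.
rewrite (@eq_qform _ _ _ (fun u v => 2 * laplacian H u v
    + (u == v)%:R * off_component u + c * edge_pair u v)); last by move=> u v; rewrite mxE.
by rewrite !qformD !qformZ qform_laplacian // qform_diag qform_edge_pair.
Qed.

Lemma witness_sym c : (witness c)^T = witness c.
Proof.
apply/matrixP => u v; rewrite !mxE; have [->|uv] := eqVneq v u; first by [].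
by rewrite /laplacian /edge_pair (eq_sym u v) (negbTE uv) Hsym /=; ring.
Qed.

Lemma thresh_witness c : ~~ H i j -> thresh H (witness c) = witness 0.
Proof.
move=> nHij; apply/matrixP => u v; rewrite !mxE mul0r addr0.
have [<-|uv] := eqVneq u v; first by rewrite edge_pair_diag mulr0 addr0.
case: (boolP (H u v)) => Huv /=.
  by rewrite (@edge_pair_eq0 H) ?mulr0 ?addr0 // Huv (negbTE nHij).
by rewrite /laplacian (negbTE uv) (negbTE Huv) /=; ring.
Qed.

Lemma witness0_not_posdef : ~ posdef (witness 0).
Proof.
pose x : 'cV[R]_n := \col_u (connect H i u)%:R.
have x_neq0 : x != 0.
  by apply/matrix0Pn; exists i, ord0; rewrite mxE connect0 oner_eq0.
move=> [_ /(_ x x_neq0)]; rewrite mx_qformE qform_witness mul0r addr0.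
rewrite lap_energy_eq0 ?add0r; last first.
  by move=> a b Hab; rewrite !mxE (same_connect_r (sym_connect_sym Hsym) (connect1 Hab)).
rewrite big1 ?ltxx // => u _; rewrite /off_component mxE.
by case: (connect H i u); rewrite ?expr0n ?mul0r ?mulr0.
Qed.

Section PositiveWeight.
Variable c : R.
Hypotheses (c_gt0 : 0 < c)
  (c_bound : forall x, c * (x i - x j) ^+ 2 <= lap_energy H x).

Lemma witness_qform_le0 x :
  qform (fun u v => witness c u v) x <= 0 -> forall u, x u = 0.
Proof.
rewrite qform_witness; set L := lap_energy H x.
set S := \sum_u off_component u * x u ^+ 2 => Q_le0.
have L_ge0 : 0 <= L := lap_energy_ge0 H x.
have S_ge0 : 0 <= S by apply: sumr_ge0 => u _; rewrite mulr_ge0 ?sqr_ge0.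
have diff_le := c_bound x; rewrite -/L in diff_le.
have sum_ge0 : 0 <= c * (x i + x j) ^+ 2 by rewrite mulr_ge0 ?sqr_ge0 ?ltW.
have polarize : 2 * (L + S + c * (2 * x i * x j))
    = L + 2 * S + c * (x i + x j) ^+ 2 + (L - c * (x i - x j) ^+ 2) by ring.
have [L_eq0 S_eq0] : L = 0 /\ S = 0 by split; lra.
have [sum_sq diff_sq] : c * (x i + x j) ^+ 2 <= 0 /\ c * (x i - x j) ^+ 2 <= 0.
  by split; lra.
rewrite !(pmulr_rle0 _ c_gt0) in sum_sq diff_sq.
have xi_eq0 : x i = 0.
  by move: (sqr_le0_eq0 sum_sq) (sqr_le0_eq0 diff_sq); lra.
move=> u; case: (boolP (connect H i u)) => [iu | niu].
  by rewrite -(lap_energy_eq0_connect L_eq0 iu).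
have /(_ u isT) := psumr_eq0P (fun v _ => mulr_ge0 (ler0n _ _) (sqr_ge0 (x v))) S_eq0.
by rewrite /off_component niu mul1r => /eqP; rewrite sqrf_eq0 => /eqP.
Qed.

Lemma witness_posdef : posdef (witness c).
Proof.
split=> [|x x_neq0]; first exact: witness_sym.
rewrite mx_qformE ltNge; apply: contra x_neq0 => /witness_qform_le0 x_eq0.
by apply/eqP/matrixP => u k; rewrite ord1 mxE x_eq0.
Qed.

End PositiveWeight.

Lemma witness_support (G : rel 'I_n) c u v : symmetric G -> subrel H G ->
  G i j -> u != v -> ~~ G u v -> witness c u v = 0.
Proof.
move=> Gsym HG Gij uv nGuv.
have nHuv : H u v = false by apply: contraNF nGuv; apply: HG.
rewrite mxE (@edge_pair_eq0 G) ?Gij ?(negbTE nGuv) //.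
by rewrite /laplacian (negbTE uv) nHuv /=; ring.
Qed.

Lemma connected_nonedge_not_thresh_posdef (G : rel 'I_n) :
  symmetric G -> subrel H G -> G i j -> ~~ H i j -> connect H i j ->
  exists A : 'M[R]_n, in_PG G A /\ ~ posdef (thresh H A).
Proof.
move=> Gsym HG Gij nHij conn_ij.
have [K K_ge0 HK] := connect_lap_energy_bound (R := R) conn_ij.
pose c := (K + 1)^-1.
have c_gt0 : 0 < c by rewrite invr_gt0; lra.
have c_bound x : c * (x i - x j) ^+ 2 <= lap_energy H x.
  rewrite mulrC ler_pdivrMr; last lra.
  by have := HK x; have := lap_energy_ge0 H x; nra.
exists (witness c); split; last by rewrite thresh_witness //; apply: witness0_not_posdef.
split; first exact: witness_posdef.
by move=> u v; apply: (witness_support _ Gsym HG Gij).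
Qed.

End Counterexample.

Section BlockRestriction.
Context {R : realType} {n : nat} (P : {set {set 'I_n}}).
Hypothesis partP : partition P [set: 'I_n].

Let coverP u : u \in cover P.
Proof. by case/and3P: partP => /eqP-> _ _; rewrite inE. Qed.

Let trivP : trivIset P.
Proof. by case/and3P: partP. Qed.

Lemma same_block_pblock u v :
  [exists B in P, (u \in B) && (v \in B)] = (v \in pblock P u).
Proof.
apply/existsP/idP => [[B /andP[PB /andP[uB vB]]]|vPu].
  by rewrite (def_pblock trivP PB uB).
by exists (pblock P u); rewrite pblock_mem //= mem_pblock coverP.
Qed.

Lemma pblock_sym u v : (v \in pblock P u) = (u \in pblock P v).
Proof.
rewrite -!same_block_pblock.
by apply/existsP/existsP => -[B /and3P[PB uB vB]]; exists B; rewrite PB uB vB.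
Qed.

Lemma sum_block_indicators u v :
  \sum_(B in P) (u \in B)%:R * (v \in B)%:R = (v \in pblock P u)%:R :> R.
Proof.
rewrite (bigD1 (pblock P u)) ?pblock_mem //= mem_pblock coverP mul1r.
rewrite big1 ?addr0 // => B /andP[PB neqB].
have [uB|_] := boolP (u \in B); last by rewrite mul0r.
by rewrite (def_pblock trivP PB uB) eqxx in neqB.
Qed.

Definition block_restrict (A : 'M[R]_n) : 'M[R]_n :=
  \matrix_(u, v) (A u v * (v \in pblock P u)%:R).

Definition restrict_col (B : {set 'I_n}) (x : 'cV[R]_n) : 'cV[R]_n :=
  \col_u ((u \in B)%:R * x u ord0).

Lemma block_restrict_qform (A : 'M[R]_n) (x : 'cV[R]_n) :
  (x^T *m block_restrict A *m x) ord0 ord0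
  = \sum_(B in P) ((restrict_col B x)^T *m A *m restrict_col B x) ord0 ord0.
Proof.
rewrite mx_qformE; under [RHS]eq_bigr => B _ do rewrite mx_qformE.
rewrite /qform [RHS]exchange_big; apply: eq_bigr => u _.
rewrite [RHS]exchange_big; apply: eq_bigr => v _.
rewrite mxE -sum_block_indicators !mulr_sumr mulr_suml; apply: eq_bigr => B _.
rewrite !mxE; ring.
Qed.

Lemma block_restrict_posdef (A : 'M[R]_n) : posdef A -> posdef (block_restrict A).
Proof.
move=> [A_sym A_pos]; split.
  by apply/matrixP => u v; rewrite !mxE -{1}A_sym mxE pblock_sym.
move=> x /matrix0Pn[u0 [k]]; rewrite ord1 => xu0_neq0.
have qA_ge0 (y : 'cV[R]_n) : 0 <= (y^T *m A *m y) ord0 ord0.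
  have [->|y_neq0] := eqVneq y 0; last exact: ltW (A_pos y y_neq0).
  by rewrite mulmx0 mxE.
rewrite block_restrict_qform (bigD1 (pblock P u0)) ?pblock_mem //=.
rewrite ltr_pwDl ?sumr_ge0 //; apply: A_pos; apply/matrix0Pn.
by exists u0, ord0; rewrite mxE mem_pblock coverP mul1r.
Qed.

Lemma thresh_block_restrict (G H : rel 'I_n) (A : 'M[R]_n) :
  (forall u v, H u v = G u v && [exists B in P, (u \in B) && (v \in B)]) ->
  (forall u v, u != v -> ~~ G u v -> A u v = 0) ->
  thresh H A = block_restrict A.
Proof.
move=> HE A0; apply/matrixP => u v; rewrite !mxE HE same_block_pblock.
have [<-|uv] := eqVneq u v; first by rewrite mem_pblock coverP mulr1.
case: (v \in pblock P u); rewrite ?andbT ?andbF ?mulr1 ?mulr0 //=.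
by have [//|nGuv] := boolP (G u v); rewrite A0.
Qed.

End BlockRestriction.

Theorem theorem4 (R : realType) (n : nat) (G H : rel 'I_n) :
  simple_graph G -> simple_graph H -> subrel H G ->
  (forall A : 'M[R]_n, in_PG G A -> posdef (thresh H A)) <->
  (exists P : {set {set 'I_n}},
      partition P [set: 'I_n] /\
      forall i j : 'I_n,
        H i j = G i j && [exists B in P, (i \in B) && (j \in B)]).
Proof.
move=> [Gsym Girr] [Hsym _] HG.
split=> [PG_thresh | [P [partP HE]] A [A_pd A0]]; last first.
  by rewrite (thresh_block_restrict partP HE A0); apply: block_restrict_posdef.
have connect_equiv : {in [set: 'I_n] & &, equivalence_rel (connect H)}.
  move=> x y z _ _ _; split=> [|conn_xy]; first exact: connect0.
  by rewrite (same_connect (sym_connect_sym Hsym) conn_xy).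
have partP := equivalence_partitionP connect_equiv.
exists (equivalence_partition (connect H) [set: 'I_n]); split=> // i j.
rewrite (same_block_pblock partP) (pblock_equivalence_partition connect_equiv) ?inE //.
have [Hij|nHij] := boolP (H i j); first by rewrite HG // connect1.
have [Gij|] //= := boolP (G i j); apply/esym/negbTE/negP => conn_ij.
have neq_ij : i != j by apply: contraTneq Gij => ->; rewrite Girr.
have [A [A_PG A_not_pd]] :=
  connected_nonedge_not_thresh_posdef (R := R) Hsym neq_ij Gsym HG Gij nHij conn_ij.
exact: A_not_pd (PG_thresh A A_PG).
Qed.
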